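(* For any alphabet size $q\ge2$ and any $i\in\{1,2,\dots,q\}$, no infinite family of $q$-ary codes with rate bounded away from zero is list-decodable (with list size $2^{o(n)}$, $n$ the block length) from a $\delta=\frac{q-i}{q}$ fraction of deletions and a $\gamma=\frac{i(i-1)}{q}$ fraction of insertions.
   Context: A $q$-ary code of block length $n$ is $C\subseteq\Sigma^n$ with $|\Sigma|=q$, rate $\log_q|C|/n$. $C$ is $L$-list decodable from $\delta n$ deletions and $\gamma n$ insertions if every string $y$ can be obtained from at most $L$ codewords by at most $\delta n$ deletions and at most $\gamma n$ insertions (deleting symbols of the codeword and inserting arbitrary symbols at arbitrary positions). *)

From mathcomp Require Import all_boot.
Set Implicit Arguments. Unset Strict Implicit. Unset Printing Implicit Defensive.

Definition frac_le (k num den n : nat) : Prop := k * den <= num * n.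

(* Deleting symbols of x and inserting arbitrary symbols at arbitrary positions
   yields y iff there is a common subsequence z of x and y; the number of
   deletions is |x| - |z| and the number of insertions is |y| - |z|. *)
Definition obtainable (T : eqType) (N dn dd inn idd : nat) (x y : seq T) : Prop :=
  exists z : seq T, [/\ subseq z x, subseq z y,
                        frac_le (size x - size z) dn dd N &
                        frac_le (size y - size z) inn idd N].

Definition list_decodable (q N : nat) (C : {set N.-tuple 'I_q}) (L : nat)
  (dn dd inn idd : nat) : Prop :=
  forall (y : seq 'I_q) (S : {set N.-tuple 'I_q}),
    S \subset C ->
    (forall c, c \in S -> obtainable N dn dd inn idd (tval c) y) ->
    #|S| <= L.

From mathcomp Require Import all_boot zify.
Set Implicit Arguments. Unset Strict Implicit. Unset Printing Implicit Defensive.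

(* Every codeword x of length n has a set A of i symbols covering at least i n / q
   of its positions.  Keeping the last t = ceil(i n / q) positions of x carrying
   symbols of A deletes at most (q - i) n / q symbols, and these t symbols form a
   subsequence of the string y(A, s) = (enum A)^(t-1) s, where s is the last
   symbol of x in A; y(A, s) has only (t - 1)(i - 1) <= i (i - 1) n / q extra
   symbols.  Hence the code is covered by the at most 2^q q lists of the strings
   y(A, s), so |C| <= 2^q q L.  With |C| >= q^(n/r) and L = 2^(o(n)) this forces
   2^n to stay bounded, which fails for large block lengths. *)

Lemma count_mem_sum (T : finType) (B : {set T}) (x : seq T) :
  count (mem B) x = \sum_(b in B) count (pred1 b) x.
Proof.
elim: x => [|a x IH] /=; first by rewrite big1.
rewrite big_split /= -IH; congr (_ + _).
have [aB | naB] := boolP (a \in B).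
  rewrite (bigD1 a) //= eqxx big1 // => b /andP[_ /negPf].
  by rewrite eq_sym => ->.
by rewrite big1 // => b bB; case: eqP => // ab; rewrite ab bB in naB.
Qed.

Lemma exists_ge_average (T : finType) (B : {set T}) (g : T -> nat) :
  0 < #|B| -> exists2 b, b \in B & \sum_(c in B) g c <= g b * #|B|.
Proof.
move=> B_gt0.
have [/exists_inP[b bB hb] | ] := boolP [exists b in B, \sum_(c in B) g c <= g b * #|B|].
  by exists b.
rewrite negb_exists_in => /forall_inP below.
have: \sum_(c in B) g c * #|B| < \sum_(c in B) \sum_(d in B) g d.
  case/card_gt0P: B_gt0 => b0 b0B.
  rewrite (bigD1 b0) //= [X in _ < X](bigD1 b0) //= -addSn.
  rewrite leq_add ?ltnNge ?below //.
  by apply: leq_sum => c /andP[cB _]; rewrite ltnW // ltnNge below.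
by rewrite -big_distrl /= sum_nat_const mulnC ltnn.
Qed.

(* Grow A one symbol at a time, each time adding a most frequent symbol outside A. *)
Lemma exists_heavy_set (T : finType) (x : seq T) (j : nat) : j <= #|T| ->
  exists A : {set T}, #|A| = j /\ j * size x <= count (mem A) x * #|T|.
Proof.
elim: j => [|j IH] ltjT; first by exists set0; rewrite cards0.
have [A [cardA heavyA]] := IH (ltnW ltjT).
have cardCA : #|~: A| = #|T| - j by rewrite cardsCs setCK cardA.
have [b bCA hb] := @exists_ge_average _ (~: A) (fun b => count (pred1 b) x)
  ltac:(rewrite cardCA; lia).
have bA : b \notin A by rewrite inE in bCA.
exists (b |: A); split; first by rewrite cardsU1 bA cardA.
have countCA : count (mem (~: A)) x = size x - count (mem A) x.
  by rewrite -(count_predC (mem A) x) addKn; apply: eq_count => y; rewrite !inE.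
have countbA : count (mem (b |: A)) x = count (pred1 b) x + count (mem A) x.
  by rewrite !count_mem_sum big_setU1.
rewrite -count_mem_sum countCA cardCA in hb.
rewrite countbA.
have := count_size (mem A) x.
set c := count (mem A) x in heavyA hb *; set d := count (pred1 b) x in hb *.
rewrite -(leq_pmul2r (_ : 0 < #|T| - j)); [nia | lia].
Qed.

Lemma subseq_flatten_nseq (T : eqType) (s w : seq T) (m : nat) :
  all (mem s) w -> size w <= m -> subseq w (flatten (nseq m s)).
Proof.
elim: w m => [|a w IH] [|m] //=; first by rewrite sub0seq.
case/andP=> sa ws ltwm.
by rewrite -cat1s cat_subseq ?sub1seq ?IH.
Qed.

Lemma size_flatten_nseq (T : Type) (s : seq T) (m : nat) :
  size (flatten (nseq m s)) = m * size s.
Proof. by elim: m => //= m IH; rewrite size_cat IH mulSn. Qed.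

Lemma subseq_periodic_last (T : eqType) (s z : seq T) (a : T) :
  all (mem s) z -> 0 < size z ->
  subseq z (flatten (nseq (size z).-1 s) ++ [:: last a z]).
Proof.
case/lastP: z => [|w b] // /[swap] _.
rewrite all_rcons last_rcons size_rcons -cats1 => /andP[_ ws].
exact/cat_subseq/subseq_refl/subseq_flatten_nseq.
Qed.

Section PatternCover.

Variables q i : nat.
Hypotheses (i_gt0 : 0 < i) (leiq : i <= q).

(* (i n - 1) %/ q + 1 = ceil(i n / q) for i n > 0. *)
Definition pattern (n : nat) (A : {set 'I_q}) (s : 'I_q) : seq 'I_q :=
  flatten (nseq ((i * n).-1 %/ q) (enum A)) ++ [:: s].

Definition good_key (x : seq 'I_q) (p : {set 'I_q} * 'I_q) : bool :=
  [&& #|p.1| == i, i * size x <= count (mem p.1) x * q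
    & p.2 == last p.2 (filter (mem p.1) x)].

Lemma exists_good_key (x : seq 'I_q) : 0 < size x -> exists p, good_key x p.
Proof.
move=> x_gt0.
have [A [cardA heavyA]] := @exists_heavy_set _ x i ltac:(by rewrite card_ord).
rewrite card_ord in heavyA.
have fpos : 0 < size (filter (mem A) x).
  rewrite size_filter lt0n; apply: contraTneq heavyA => ->.
  by rewrite -ltnNge muln_gt0 i_gt0 x_gt0.
have [w [s xA]] : exists w s, filter (mem A) x = rcons w s.
  by case/lastP: (filter _ _) fpos => // w s _; exists w, s.
by exists (A, s); rewrite /good_key /= cardA heavyA xA last_rcons !eqxx.
Qed.

Lemma obtainable_pattern (n : nat) (x : seq 'I_q) (A : {set 'I_q}) (s : 'I_q) :
  0 < n -> size x = n -> good_key x (A, s) ->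
  obtainable n (q - i) q (i * (i - 1)) q x (pattern n A s).
Proof.
move=> x_gt0 size_x; subst n; move=> /and3P[/= /eqP cardA heavyA /eqP lastA].
set m := (i * size x).-1 %/ q.
have q_gt0 : 0 < q by lia.
have ix_gt0 : 0 < i * size x by rewrite muln_gt0 i_gt0.
have /andP[mq_lt mq_ge] : m * q < i * size x <= m.+1 * q.
  have := divn_eq (i * size x).-1 q; have := ltn_pmod (i * size x).-1 q_gt0.
  rewrite -/m; lia.
set f := filter (mem A) x.
have mf : m.+1 <= size f.
  by rewrite size_filter -(ltn_pmul2r q_gt0) (leq_trans mq_lt heavyA).
set z := drop (size f - m.+1) f.
have size_z : size z = m.+1 by rewrite size_drop; lia.
exists z; split.
- exact: subseq_trans (drop_subseq _ _) (filter_subseq _ _).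
- have last_z : last s z = s.
    rewrite {2}lastA -/f -(cat_take_drop (size f - m.+1) f) last_cat -/z.
    by case: z size_z.
  have zA : all (mem (enum A)) z.
    by apply/allP => y /mem_drop; rewrite mem_filter => /andP[yA _]; rewrite /= mem_enum.
  by rewrite /pattern -/m -{1}last_z -[m]/(m.+1.-1) -size_z subseq_periodic_last ?size_z.
- by rewrite /frac_le size_z !mulnBl [q * _]mulnC leq_sub2l.
- rewrite /frac_le size_z size_cat size_flatten_nseq -cardE cardA /=.
  rewrite addn1 subSS -[m in _ - m]muln1 -mulnBr.
  rewrite -/m mulnAC (leq_trans (leq_mul (ltnW mq_lt) (leqnn (i - 1)))) //.
  by rewrite mulnAC.
Qed.

End PatternCover.

Lemma card_le_key_cover (q N : nat) (C : {set N.-tuple 'I_q}) (K : finType)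
    (key : seq 'I_q -> K -> bool) (pat : K -> seq 'I_q) (L dn dd inn idd : nat) :
  list_decodable C L dn dd inn idd ->
  (forall c : N.-tuple 'I_q, exists p, key c p) ->
  (forall (c : N.-tuple 'I_q) p, key c p -> obtainable N dn dd inn idd c (pat p)) ->
  #|C| <= #|K| * L.
Proof.
move=> decC keyP obtP.
have [-> | [c0 _]] := set_0Vmem C; first by rewrite cards0.
have [p0 _] := keyP c0.
pose f (c : N.-tuple 'I_q) := odflt p0 [pick p | key c p].
have keyf (c : N.-tuple 'I_q) : key c (f c).
  by rewrite /f; case: pickP => [p // | none]; have [p] := keyP c; rewrite none.
rewrite -sum1_card (partition_big f predT) //= -[#|K|]sum1_card big_distrl /=.
apply: leq_sum => p _; rewrite mul1n.
rewrite (eq_bigl (fun c => c \in [set c in C | f c == p])); last by move=> c; rewrite inE.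
rewrite sum1_card; apply: (decC (pat p)) => [|c].
  by apply/subsetP => c; rewrite inE => /andP[].
by rewrite inE => /andP[_ /eqP fc]; apply: obtP; rewrite -fc.
Qed.

Lemma list_decodable_card_le (q i N : nat) (C : {set N.-tuple 'I_q}) (L : nat) :
  0 < i <= q -> 0 < N -> list_decodable C L (q - i) q (i * (i - 1)) q ->
  #|C| <= #|{: {set 'I_q} * 'I_q}| * L.
Proof.
case/andP=> i_gt0 leiq N_gt0 decC.
apply: (card_le_key_cover decC (key := good_key i) (pat := fun p => pattern i N p.1 p.2)).
  by move=> c; apply: exists_good_key; rewrite ?size_tuple.
by move=> c [A s]; apply: obtainable_pattern; rewrite ?size_tuple.
Qed.

(* 4^N <= q^(2N) <= (K0 l)^(2r) <= K0^(2r) 2^N. *)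
Lemma exp2_le_of_rate (q N K0 r l : nat) : 2 <= q -> 0 < N ->
  q ^ N <= (K0 * l) ^ r -> l ^ (r + r) <= 2 ^ N -> 2 ^ N <= K0 ^ (r + r).
Proof.
move=> le2q N_gt0 rate list_size.
rewrite -(leq_pmul2r (expn_gt0 2 N)).
have le2qN : 2 ^ N <= q ^ N by rewrite leq_exp2r.
apply: leq_trans (leq_mul le2qN le2qN) _.
apply: leq_trans (leq_mul rate rate) _.
by rewrite -expnD expnMn leq_mul.
Qed.

Unset Implicit Arguments.
Theorem theorem5p1 (q i : nat) (hq : 2 <= q) (hi1 : 1 <= i) (hiq : i <= q)
  (n : nat -> nat) (C : forall k : nat, {set (n k).-tuple 'I_q}) (L : nat -> nat)
  (hn : forall k, n k < n k.+1)
  (hrate : exists r : nat, 0 < r /\ forall k, q ^ (n k) <= #|C k| ^ r)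
  (hL : forall m : nat, 0 < m -> exists K, forall k, K <= k -> L k ^ m <= 2 ^ (n k)) :
  ~ (forall k, list_decodable (C k) (L k) (q - i) q (i * (i - 1)) q).
Proof.
move=> decC.
have [r [r_gt0 rateC]] := hrate.
have [K small_L] := hL (r + r) ltac:(lia).
pose K0 := #|{: {set 'I_q} * 'I_q}|.
pose k := (maxn K (K0 ^ (r + r))).+1.
have n_ge j : j <= n j by elim: j => // j IH; apply: leq_trans (hn j).
have nk_gt0 : 0 < n k := leq_trans (ltn0Sn _) (n_ge k).
have card_Ck : #|C k| <= K0 * L k.
  by apply: list_decodable_card_le => //; rewrite hi1 hiq.
have rate_k : q ^ n k <= (K0 * L k) ^ r.
  by apply: leq_trans (rateC k) _; rewrite leq_exp2r.
have := exp2_le_of_rate hq nk_gt0 rate_k (small_L k (leq_trans (leq_maxl _ _) (leqnSn _))).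
have := ltn_expl (n k) (leqnn 2); have := n_ge k; rewrite /k; lia.
Qed.
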